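(* Let $\lambda\in(0,1)$ be fixed and let $\omega\sim\mathcal G(n,p)$ with $p=\lambda/n$. There exists $c=c(\lambda)>0$ such that for every $\rho>0$ there exists $M_0=M_0(\lambda,\rho)$ such that for every $M\geq M_0$ there is $C=C(\lambda,\rho,M)$ with \[\mathbb P\big(|S_M(\omega)|\geq \rho n\big)\leq C e^{-c\rho n}\quad\text{for all } n.\]
   Context: $\mathcal G(n,p)$ is the Erdős–Rényi random graph on vertex set $\{1,\dots,n\}$. For a graph $\omega$ and vertex $x$, $\mathcal C_x$ denotes the connected component (cluster) of $x$, and $S_M(\omega)=\{x:|\mathcal C_x|>M\}$ is the set of vertices in clusters of size larger than $M$. *)

From Stdlib Require Import Reals.
From mathcomp Require Import all_boot.
Set Implicit Arguments. Unset Strict Implicit. Unset Printing Implicit Defensive.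

Definition pairs (n : nat) : {set 'I_n * 'I_n} := [set u : 'I_n * 'I_n | (val u.1 < val u.2)%N].

(* A graph omega on vertex set 'I_n is a subset E of [pairs n] (its edge set);
   the sample space of G(n,p) is [powerset (pairs n)]. *)
Definition adj (n : nat) (E : {set 'I_n * 'I_n}) : rel 'I_n :=
  fun x y => ((x, y) \in E) || ((y, x) \in E).

Definition cluster (n : nat) (E : {set 'I_n * 'I_n}) (x : 'I_n) : {set 'I_n} :=
  [set y | connect (adj E) x y].

Definition S_M (n M : nat) (E : {set 'I_n * 'I_n}) : {set 'I_n} :=
  [set x | (M < #|cluster E x|)%N].

Definition ER_weight (n : nat) (p : R) (E : {set 'I_n * 'I_n}) : R :=
  Rmult (pow p #|E|) (pow (Rminus 1 p) (#|pairs n| - #|E|)).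

Definition ER_prob (n : nat) (p : R) (A : pred {set 'I_n * 'I_n}) : R :=
  \big[Rplus/R0]_(E in powerset (pairs n) | A E) ER_weight p E.

Definition Rleb (a b : R) : bool := if Rle_dec a b then true else false.

(* Let C(S) be the union of the clusters of the vertices of S in
   G(n,p).  Revealing the edges at a vertex u of S, u contributes one vertex to C(S)
   and is replaced by its (at most Binomial(n,p)) new neighbours; hence if
   z (1 - p + p w)^n <= w then E[z^|C(S)|] <= w^|S|, by induction on the number of
   unexplored vertices.  If |S_M| >= rho n, the set R of least vertices of the large
   clusters satisfies (M+1)|R| <= |S_M| <= |C(R)|, so with z = e^a and
   t = e^(-a(M+1)/2) a union bound over all S gives
   P(|S_M| >= rho n) <= e^(-a rho n/2) (1 + t w)^n <= e^(-a rho n/4) for large M.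
   For p = lambda/n one may take w = 1 + (1 - lambda)/2 and z = w (1 - lambda (w - 1)) > 1. *)

From HB Require Import structures.
From Stdlib Require Import Reals Lra.
From mathcomp Require Import all_boot zify.
Set Implicit Arguments.
Unset Strict Implicit.
Local Open Scope R_scope.

Lemma RplusA : associative Rplus. Proof. by move=> *; rewrite Rplus_assoc. Qed.
Lemma RmultA : associative Rmult. Proof. by move=> *; rewrite Rmult_assoc. Qed.
HB.instance Definition _ := Monoid.isComLaw.Build R R0 Rplus RplusA Rplus_comm Rplus_0_l.
HB.instance Definition _ := Monoid.isComLaw.Build R R1 Rmult RmultA Rmult_comm Rmult_1_l.
HB.instance Definition _ := Monoid.isMulLaw.Build R R0 Rmult Rmult_0_l Rmult_0_r.
HB.instance Definition _ := Monoid.isAddLaw.Build R Rmult Rplus Rmult_plus_distr_r Rmult_plus_distr_l.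

Lemma sumR_le (I : finType) (P : pred I) (F G : I -> R) :
  (forall i, P i -> F i <= G i) ->
  \big[Rplus/R0]_(i | P i) F i <= \big[Rplus/R0]_(i | P i) G i.
Proof.
move=> FG; apply: (big_ind2 (fun a b => a <= b)) => //; first lra.
by move=> *; apply: Rplus_le_compat.
Qed.

Lemma sumR_ge0 (I : finType) (P : pred I) (F : I -> R) :
  (forall i, P i -> 0 <= F i) -> 0 <= \big[Rplus/R0]_(i | P i) F i.
Proof.
move=> F0; apply: (big_ind (fun a => 0 <= a)) => //; first lra.
by move=> *; apply: Rplus_le_le_0_compat.
Qed.

Lemma sumR_le_cond (I : finType) (P Q : pred I) (F : I -> R) :
  (forall i, P i -> 0 <= F i) ->
  \big[Rplus/R0]_(i | P i && Q i) F i <= \big[Rplus/R0]_(i | P i) F i.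
Proof.
move=> F0; rewrite big_mkcondr /=.
by apply: sumR_le => i Pi; case: (Q i); [lra | exact: F0].
Qed.

Lemma sumR_ge_term (I : finType) (P : pred I) (F : I -> R) i :
  P i -> (forall j, P j -> 0 <= F j) -> F i <= \big[Rplus/R0]_(j | P j) F j.
Proof.
move=> Pi F0; rewrite (bigD1 i) //=.
suff : 0 <= \big[Rplus/R0]_(j | P j && (j != i)) F j by lra.
by apply: sumR_ge0 => j /andP [Pj _]; exact: F0.
Qed.

Section Powerset.
Variable T : finType.
Implicit Types A B E F : {set T}.

Lemma setUK_disjoint {A B E F} : [disjoint A & B] -> E \subset A -> F \subset B ->
  (E :|: F) :&: A = E.
Proof.
move=> dAB sEA sFB; rewrite setIUl (setIidPl sEA).
suff -> : F :&: A = set0 by rewrite setU0.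
by apply/disjoint_setI0; rewrite disjoint_sym; exact: disjointWr dAB.
Qed.

Lemma big_powersetU (f : {set T} -> R) A B : [disjoint A & B] ->
  \big[Rplus/R0]_(G in powerset (A :|: B)) f G =
  \big[Rplus/R0]_(E in powerset A) \big[Rplus/R0]_(F in powerset B) f (E :|: F).
Proof.
move=> dAB; rewrite pair_big_dep /=.
pose D := [pred q : {set T} * {set T} | (q.1 \in powerset A) && (q.2 \in powerset B)].
have -> : powerset (A :|: B) = [set q.1 :|: q.2 | q in D].
  apply/setP => G; apply/idP/imsetP.
  - rewrite powersetE => sG; exists (G :&: A, G :&: B).
      by rewrite inE /= !powersetE !subsetIr.
    by rewrite /= -setIUr; apply/esym/setIidPl.
  - move=> [[E F]] /andP /= [sE sF] ->.
    by rewrite !powersetE in sE sF *; exact: setUSS.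
rewrite big_imset //= => -[E1 F1] [E2 F2] /andP /= [sE1 sF1] /andP /= [sE2 sF2] /= eq12.
rewrite !powersetE in sE1 sF1 sE2 sF2.
have dBA : [disjoint B & A] by rewrite disjoint_sym.
congr pair.
  by rewrite -(setUK_disjoint dAB sE1 sF1) eq12 (setUK_disjoint dAB sE2 sF2).
by rewrite -(setUK_disjoint dBA sF1 sE1) setUC eq12 setUC (setUK_disjoint dBA sF2 sE2).
Qed.

Definition binom_weight (a b : R) A E : R := a ^ #|E| * b ^ (#|A| - #|E|).

Lemma binom_weightU a b A B E F : [disjoint A & B] -> E \subset A -> F \subset B ->
  binom_weight a b (A :|: B) (E :|: F) = binom_weight a b A E * binom_weight a b B F.
Proof.
move=> dAB sEA sFB.
have dEF : [disjoint E & F] by exact: disjointWl sEA (disjointWr sFB dAB).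
rewrite /binom_weight !cardsU (disjoint_setI0 dAB) (disjoint_setI0 dEF) !cards0 !subn0.
have := subset_leq_card sEA; have := subset_leq_card sFB => leF leE.
have -> : (#|A| + #|B| - (#|E| + #|F|) = (#|A| - #|E|) + (#|B| - #|F|))%N by lia.
rewrite !pow_add; ring.
Qed.

Lemma sum_binom_weight a b A :
  \big[Rplus/R0]_(E in powerset A) binom_weight a b A E = (a + b) ^ #|A|.
Proof.
move Hk: #|A| => k; elim: k A Hk => [|k IH] A.
  move/eqP; rewrite cards_eq0 => /eqP ->.
  by rewrite powerset0 big_set1 /binom_weight cards0 /=; ring.
have [->|[x xA]] := set_0Vmem A; first by rewrite cards0.
rewrite -(setD1K xA) cardsU1 !inE eqxx /= => -[kA].
have dxA : [disjoint [set x] & A :\ x] by rewrite disjoints1 !inE eqxx.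
rewrite big_powersetU //.
under eq_bigr => E sE do under eq_bigr => F sF do
  rewrite binom_weightU // -?powersetE //.
under eq_bigr => E _ do rewrite -big_distrr /= IH ?add0n //.
rewrite -big_distrl /= powerset1 big_setU1 /=; last first.
  by rewrite inE eq_sym; apply/eqP => /setP /(_ x); rewrite !inE eqxx.
by rewrite big_set1 /binom_weight cards1 cards0 /=; ring.
Qed.

Definition expect (p : R) A (f : {set T} -> R) : R :=
  \big[Rplus/R0]_(E in powerset A) (binom_weight p (1 - p) A E * f E).

Lemma expectU p A B f : [disjoint A & B] ->
  expect p (A :|: B) f = expect p B (fun F => expect p A (fun E => f (E :|: F))).
Proof.
move=> dAB; rewrite /expect big_powersetU // exchange_big /=.
apply: eq_bigr => F sF; rewrite big_distrr /=; apply: eq_bigr => E sE.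
by rewrite binom_weightU -?powersetE //; ring.
Qed.

Lemma expect_le p A f g : 0 <= p <= 1 -> (forall E, E \subset A -> f E <= g E) ->
  expect p A f <= expect p A g.
Proof.
move=> p01 fg; apply: sumR_le => E; rewrite powersetE => sE.
apply: Rmult_le_compat_l; last exact: fg.
by apply: Rmult_le_pos; apply: pow_le; lra.
Qed.

Lemma expectZ p A c f : expect p A (fun E => c * f E) = c * expect p A f.
Proof. by rewrite /expect big_distrr; apply: eq_bigr => E _ /=; ring. Qed.

Lemma expect_pow_card p A x :
  expect p A (fun E => x ^ #|E|) = (1 - p + p * x) ^ #|A|.
Proof.
rewrite Rplus_comm -sum_binom_weight; apply: eq_bigr => E _.
by rewrite /binom_weight Rpow_mult_distr; ring.
Qed.

Lemma expect_cst p A c : expect p A (fun _ => c) = c.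
Proof.
rewrite /expect -big_distrl /= sum_binom_weight.
by replace (p + (1 - p)) with 1 by ring; rewrite pow1 Rmult_1_l.
Qed.

Lemma expect_sum (I : finType) (P : pred I) p A (g : I -> {set T} -> R) :
  expect p A (fun E => \big[Rplus/R0]_(i | P i) g i E) =
  \big[Rplus/R0]_(i | P i) expect p A (g i).
Proof.
rewrite /expect exchange_big /=; apply: eq_bigr => E _; exact: big_distrr.
Qed.

End Powerset.

Lemma forward_closed_connect (T : finType) (e : rel T) (A : {set T}) x y :
  (forall a b, a \in A -> e a b -> b \in A) -> x \in A -> connect e x y -> y \in A.
Proof.
move=> clA + /connectP [q pth ->]; elim: q x pth => //= b q IH x /andP [exb pth] xA.
exact: IH pth (clA _ _ xA exb).
Qed.

Lemma exp_le x y : x <= y -> exp x <= exp y.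
Proof. by case=> [/exp_increasing|->]; lra. Qed.

Lemma exp_pow x k : exp x ^ k = exp (x * INR k).
Proof.
elim: k => [|k IH]; first by rewrite Rmult_0_r exp_0.
have -> : exp x ^ k.+1 = exp x * exp x ^ k by [].
by rewrite IH S_INR -exp_plus; congr exp; ring.
Qed.

Lemma pow_le_exp x k : 0 <= x -> (1 + x) ^ k <= exp (x * INR k).
Proof.
by move=> x0; rewrite -exp_pow; apply: pow_incr; split; [lra | exact: exp_ineq1_le].
Qed.

Section Graph.
Variable n : nat.
Implicit Types (u v : 'I_n) (V S : {set 'I_n}) (E F : {set 'I_n * 'I_n}).

Definition pairs_in V := [set e in pairs n | (e.1 \in V) && (e.2 \in V)].
Definition star u V := [set e in pairs_in V | (e.1 == u) || (e.2 == u)].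
Definition nbr u F := [set v | adj F u v].
Definition cluster_set E S := [set y | [exists x in S, connect (adj E) x y]].

Lemma pairs_inT : pairs_in setT = pairs n.
Proof. by apply/setP => e; rewrite !inE /= andbT. Qed.

Lemma pairs_in_splitD1 u V : u \in V -> pairs_in V = pairs_in (V :\ u) :|: star u V.
Proof.
move=> uV; apply/setP => e; rewrite !inE.
by case: (e.1 =P u) => [->|_]; case: (e.2 =P u) => [->|_]; rewrite ?uV ?andbF ?orbT ?andbT ?orbF.
Qed.

Lemma disjoint_pairs_in_star u V : [disjoint pairs_in (V :\ u) & star u V].
Proof.
rewrite -setI_eq0; apply/eqP/setP => e; rewrite !inE.
by case: (e.1 =P u) => [->|_]; case: (e.2 =P u) => [->|_]; rewrite ?eqxx ?andbF.
Qed.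

Definition other_end u (e : 'I_n * 'I_n) := if e.1 == u then e.2 else e.1.
Definition edge_at u v := if (u < v)%N then (u, v) else (v, u).

Lemma other_endK u V : {in star u V, cancel (other_end u) (edge_at u)}.
Proof.
move=> [a b]; rewrite !inE /other_end /edge_at /= => /andP [/andP [ab _]].
case/orP => /eqP eq; first by rewrite eq eqxx -eq ab.
by case: (a =P u) => [au|_]; [rewrite au eq ltnn in ab | rewrite -eq ltnNge ltnW].
Qed.

Lemma star_card u V : (#|star u V| <= n)%N.
Proof.
rewrite -(card_in_imset (can_in_inj (@other_endK u V))).
by rewrite -[X in (_ <= X)%N]card_ord max_card.
Qed.

Lemma nbr_card u V F : F \subset star u V -> (#|nbr u F| <= #|F|)%N.
Proof.
move=> sF; apply: leq_trans (leq_imset_card (other_end u) F).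
apply/subset_leq_card/subsetP => v; rewrite inE => /orP [uv|vu]; apply/imsetP.
  by exists (u, v) => //; rewrite /other_end eqxx.
exists (v, u) => //; rewrite /other_end /=.
have := subsetP sF _ vu; rewrite !inE /= => /andP [/andP [vu' _] _].
by case: (v =P u) => // eq; rewrite eq ltnn in vu'.
Qed.

Lemma adjU E F x y : adj (E :|: F) x y = adj E x y || adj F x y.
Proof. by rewrite /adj !inE orbACA. Qed.

Lemma sub_cluster_set E S : S \subset cluster_set E S.
Proof. by apply/subsetP => x xS; rewrite inE; apply/exists_inP; exists x. Qed.

Lemma cluster_set_adj {E S a b} : a \in cluster_set E S -> adj E a b -> b \in cluster_set E S.
Proof.
rewrite !inE => /exists_inP [x xS xa] ab; apply/exists_inP; exists x => //.
exact: connect_trans xa (connect1 ab).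
Qed.

Lemma cluster_set_disjoint V S E : E \subset pairs_in V -> S :&: V = set0 ->
  cluster_set E S \subset S.
Proof.
move=> sE SV0; apply/subsetP => y; rewrite inE => /exists_inP [x xS].
apply: forward_closed_connect xS => a b aS /orP [] /(subsetP sE); rewrite !inE => /and3P [_ aV bV];
  by [move/setP: SV0 => /(_ a); rewrite !inE aS aV | move/setP: SV0 => /(_ a); rewrite !inE aS bV].
Qed.

Lemma cluster_set_explore u V S E F : u \in S -> E \subset pairs_in (V :\ u) ->
  F \subset star u V -> cluster_set (E :|: F) S \subset u |: cluster_set E (S :\ u :|: nbr u F).
Proof.
move=> uS sE sF; set C := cluster_set E _.
have notEu b : ~~ adj E u b.
  by apply/orP => -[] /(subsetP sE); rewrite !inE eqxx !andbF.
have Fu a b : adj F a b -> a != u -> b = u.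
  by case/orP => /(subsetP sF); rewrite !inE /= => /andP [_ /orP [] /eqP] -> //; rewrite eqxx.
have nbrC b : adj F u b -> b \in C.
  by move=> ub; apply: (subsetP (sub_cluster_set E _)); rewrite !inE ub orbT.
apply/subsetP => y; rewrite inE => /exists_inP [x xS]; apply: forward_closed_connect.
  move=> a b; rewrite !in_setU1 adjU => aC /orP [ab|ab].
    case: (a =P u) aC => [au|_ /= aC]; first by rewrite au (negbTE (notEu b)) in ab.
    by rewrite (cluster_set_adj aC ab) orbT.
  case: (a =P u) => [au|/eqP au]; first by rewrite -au nbrC ?orbT // -au.
  by rewrite (Fu a b ab au) eqxx.
rewrite in_setU1; case: (x =P u) => //= /eqP xu.
by apply: (subsetP (sub_cluster_set E _)); rewrite !inE xu xS.
Qed.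

Section Exploration.
Variables p z w : R.
Hypothesis p01 : 0 <= p <= 1.
Hypothesis z1 : 1 <= z.
Hypothesis zw : z <= w.
Hypothesis zw_step : z * (1 - p + p * w) ^ n <= w.

Lemma expect_cluster_set_disjoint V S : S :&: V = set0 ->
  expect p (pairs_in V) (fun E => z ^ #|cluster_set E S|) <= w ^ #|S|.
Proof.
move=> SV0; rewrite -(expect_cst p (pairs_in V) (w ^ #|S|)).
apply: expect_le => // E sE; apply: Rle_trans (pow_incr z w _ _) => //; last lra.
by apply: Rle_pow => //; apply/leP/subset_leq_card; exact: cluster_set_disjoint sE SV0.
Qed.

Lemma expect_cluster_set V S :
  expect p (pairs_in V) (fun E => z ^ #|cluster_set E S|) <= w ^ #|S|.
Proof.
have w1 : 1 <= w by lra.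
have base1 : 1 <= 1 - p + p * w by nra.
move Hk: #|V| => k; elim: k V Hk S => [|k IH] V Hk S;
  have [SV0|[u]] := set_0Vmem (S :&: V); try exact: expect_cluster_set_disjoint.
  by rewrite inE => /andP [_ uV]; move: Hk; rewrite (cardsD1 u) uV.
rewrite inE => /andP [uS uV].
have kV : #|V :\ u| = k by move: Hk; rewrite (cardsD1 u) uV => -[].
rewrite (pairs_in_splitD1 uV) expectU; last exact: disjoint_pairs_in_star.
apply: (Rle_trans _ (expect p (star u V) (fun F => z * w ^ #|S :\ u| * w ^ #|F|))).
  apply: expect_le => // F sF; rewrite Rmult_assoc.
  apply: (Rle_trans _ (expect p (pairs_in (V :\ u))
    (fun E => z * z ^ #|cluster_set E (S :\ u :|: nbr u F)|))).
    apply: expect_le => // E sE; rewrite tech_pow_Rmult; apply: Rle_pow => //; apply/leP.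
    apply: leq_trans (subset_leq_card (cluster_set_explore uS sE sF)) _.
    by rewrite cardsU1 -add1n leq_add2r leq_b1.
  rewrite expectZ; apply: Rmult_le_compat_l; first lra.
  apply: Rle_trans (IH _ kV _) _; rewrite -pow_add; apply: Rle_pow => //; apply/leP.
  rewrite cardsU -plusE; apply: leq_trans (leq_subr _ _) _; rewrite leq_add2l; exact: nbr_card sF.
rewrite expectZ expect_pow_card (cardsD1 u S) uS pow_add pow_1.
apply: (Rle_trans _ (z * w ^ #|S :\ u| * (1 - p + p * w) ^ n)).
  apply: Rmult_le_compat_l; first by apply: Rmult_le_pos; [lra | apply: pow_le; lra].
  by apply: Rle_pow => //; apply/leP; exact: star_card.
have := pow_le w #|S :\ u| ltac:(lra); nra.
Qed.

End Exploration.

Definition cluster_roots M E : {set 'I_n} :=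
  [set x in S_M M E | [forall y in cluster E x, (x <= y)%N]].

Lemma connect_adj_sym E : connect_sym (adj E).
Proof. by apply: sym_connect_sym => x y; rewrite /adj orbC. Qed.

Lemma cluster_eq {E x y} : connect (adj E) x y -> cluster E x = cluster E y.
Proof.
move=> xy; apply/setP => v; rewrite !inE; apply/idP/idP; last exact: connect_trans.
by apply: connect_trans; rewrite connect_adj_sym.
Qed.

Lemma S_M_sub_cluster_set M E : S_M M E \subset cluster_set E (cluster_roots M E).
Proof.
apply/subsetP => y yS.
have [r yr rmin] := arg_minnP (@nat_of_ord n) (connect0 (adj E) y).
rewrite inE; apply/exists_inP; exists r; last by rewrite connect_adj_sym.
move: yS; rewrite !inE -(cluster_eq yr) => -> /=.
by apply/forall_inP => v; rewrite inE => yv; apply: rmin.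
Qed.

Lemma cluster_roots_card M E : (M.+1 * #|cluster_roots M E| <= #|S_M M E|)%N.
Proof.
set R := cluster_roots M E; pose P := [set cluster E x | x in R].
have root_min x v : x \in R -> v \in cluster E x -> (x <= v)%N.
  by rewrite inE => /andP [_ /forall_inP]; apply.
have cP : #|P| = #|R|.
  apply: card_in_imset => x1 x2 r1 r2 eq12; apply/val_inj/eqP.
  rewrite eqn_leq root_min //; last by rewrite eq12 inE.
  by rewrite root_min // -eq12 inE.
have tP : trivIset P.
  apply/trivIsetP => _ _ /imsetP [x1 _ ->] /imsetP [x2 _ ->] neq.
  rewrite -setI_eq0; apply: contraR neq => /set0Pn [v]; rewrite !inE => /andP [x1v x2v].
  by apply/eqP/cluster_eq; apply: connect_trans x1v _; rewrite connect_adj_sym.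
have coverP : cover P \subset S_M M E.
  apply/subsetP => v /bigcupP [_ /imsetP [x xR ->]]; rewrite inE => xv.
  by move: xR; rewrite !inE (cluster_eq xv) => /andP [].
apply: leq_trans (subset_leq_card coverP); rewrite -(eqP tP) -cP mulnC -sum_nat_const.
by apply: leq_sum => _ /imsetP [x xR ->]; move: xR; rewrite !inE => /andP [].
Qed.

Lemma ER_prob_le_expect p (A : pred {set 'I_n * 'I_n}) f : 0 <= p <= 1 ->
  (forall E, 0 <= f E) -> (forall E, A E -> 1 <= f E) ->
  ER_prob p A <= expect p (pairs n) f.
Proof.
move=> p01 f0 Af; have w0 E : 0 <= ER_weight p E.
  by apply: Rmult_le_pos; apply: pow_le; lra.
apply: (Rle_trans _ (\big[Rplus/R0]_(E in powerset (pairs n) | A E) (ER_weight p E * f E))).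
  apply: sumR_le => E /andP [_ AE]; rewrite -{1}(Rmult_1_r (ER_weight p E)).
  exact: Rmult_le_compat_l (Af E AE).
by apply: sumR_le_cond => E _; apply: Rmult_le_pos.
Qed.

Section Tail.
Variables (p a w rho : R) (M : nat).
Hypothesis p01 : 0 <= p <= 1.
Hypothesis a0 : 0 < a.
Hypothesis aw : exp a <= w.
Hypothesis aw_step : exp a * (1 - p + p * w) ^ n <= w.
Hypothesis M_large : exp (- (a / 2 * INR M.+1)) * w <= a * rho / 4.

Let K := exp (- (a * rho * INR n / 2)).
Let t := exp (- (a / 2 * INR M.+1)).

Lemma large_S_M_weight E : Rleb (rho * INR n) (INR #|S_M M E|) ->
  1 <= K * (t ^ #|cluster_roots M E| * exp a ^ #|cluster_set E (cluster_roots M E)|).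
Proof.
rewrite /Rleb; case: Rle_dec => // large _.
have cover := le_INR _ _ (leP (subset_leq_card (S_M_sub_cluster_set M E))).
have roots := le_INR _ _ (leP (cluster_roots_card M E)); rewrite mult_INR in roots.
rewrite /K /t !exp_pow -!exp_plus -exp_0; apply: exp_le.
move: large cover roots; set s := INR #|S_M M E|; set r := INR #|cluster_roots M E|.
set c := INR #|cluster_set E _| => large cover roots.
nra.
Qed.

Lemma ER_tail_bound :
  ER_prob p (fun E => Rleb (rho * INR n) (INR #|S_M M E|)) <= exp (- (a / 4 * rho * INR n)).
Proof.
have z1 : 1 <= exp a by rewrite -exp_0; apply: exp_le; lra.
have t0 : 0 <= t by exact/Rlt_le/exp_pos.
have K0 : 0 <= K by exact/Rlt_le/exp_pos.
set g := fun E => K * \big[Rplus/R0]_(S in powerset [set: 'I_n])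
  (t ^ #|S| * exp a ^ #|cluster_set E S|).
have g0 E : 0 <= g E.
  by apply: Rmult_le_pos => //; apply: sumR_ge0 => S _; apply: Rmult_le_pos; apply: pow_le; lra.
apply: (Rle_trans _ (expect p (pairs n) g)).
  apply: ER_prob_le_expect => // E /large_S_M_weight /Rle_trans; apply.
  apply: Rmult_le_compat_l => //.
  apply: (@sumR_ge_term _ (fun S => S \in powerset setT)).
    by rewrite powersetE subsetT.
  by move=> S _; apply: Rmult_le_pos; apply: pow_le; lra.
rewrite /g expectZ expect_sum -pairs_inT.
apply: (Rle_trans _ (K * \big[Rplus/R0]_(S in powerset [set: 'I_n]) binom_weight (t * w) 1 setT S)).
  apply: Rmult_le_compat_l => //; apply: sumR_le => S _.
  rewrite expectZ /binom_weight pow1 Rmult_1_r Rpow_mult_distr.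
  by apply: Rmult_le_compat_l; [exact: pow_le | exact: expect_cluster_set].
rewrite sum_binom_weight cardsT card_ord Rplus_comm.
apply: (Rle_trans _ (K * exp (t * w * INR n))).
  by apply: Rmult_le_compat_l => //; apply: pow_le_exp; apply: Rmult_le_pos; lra.
rewrite /K -exp_plus; apply: exp_le.
have := Rmult_le_compat_r (INR n) _ _ (pos_INR n) M_large; rewrite -/t; lra.
Qed.

End Tail.
End Graph.

(* For n = 0 the edge probability [lambda / 0] is a junk value, but there are no edges. *)
Lemma ER_prob_I0 p (A : pred {set 'I_0 * 'I_0}) : ER_prob p A = ER_prob 0 A.
Proof.
have card0 (X : {set 'I_0 * 'I_0}) : #|X| = 0%N.
  by apply: eq_card0 => -[[i hi] j]; exfalso; move: hi; rewrite ltn0.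
by apply: eq_bigr => E _; rewrite /ER_weight !card0.
Qed.

Lemma exp_neg_eventually_le b eps : 0 < b -> 0 < eps ->
  exists N, forall M, (N <= M)%N -> exp (- (b * INR M.+1)) <= eps.
Proof.
move=> b0 eps0; have beps : 0 < b * eps by nra.
have [N [N_small N0]] := archimed_cor1 _ beps.
exists N => M NM; have NM1 : INR N <= INR M.+1 by apply/le_INR/leP/leqW.
have N0' : 0 < INR N by exact: lt_0_INR.
have bM : 0 < b * INR M.+1 by apply: Rmult_lt_0_compat; lra.
rewrite exp_Ropp; apply: (Rle_trans _ (/ (b * INR M.+1))).
  by apply: Rinv_le_contravar => //; have := exp_ineq1_le (b * INR M.+1); lra.
apply: (Rmult_le_reg_l b) => //; rewrite Rinv_mult -Rmult_assoc Rinv_r ?Rmult_1_l; last lra.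
have := Rinv_le_contravar _ _ N0' NM1; lra.
Qed.

Lemma binomial_step_le l t p k : 0 <= p -> 0 <= t -> l * t <= 1 -> p * INR k = l ->
  (1 + t) * (1 - l * t) * (1 - p + p * (1 + t)) ^ k <= 1 + t.
Proof.
move=> p0 t0 lt1 pk.
have step_exp : (1 - p + p * (1 + t)) ^ k <= exp (l * t).
  replace (1 - p + p * (1 + t)) with (1 + p * t) by ring.
  by rewrite -pk (_ : p * INR k * t = p * t * INR k); [apply: pow_le_exp; nra | ring].
have one_sub_le : (1 - l * t) * exp (l * t) <= 1.
  have := exp_ineq1_le (- (l * t)); have := exp_pos (l * t).
  have : exp (- (l * t)) * exp (l * t) = 1 by rewrite -exp_plus Rplus_opp_l exp_0.
  nra.
apply: (Rle_trans _ ((1 + t) * ((1 - l * t) * exp (l * t)))).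
  by rewrite Rmult_assoc; apply: Rmult_le_compat_l; [lra | apply: Rmult_le_compat_l; lra].
by rewrite -{2}(Rmult_1_r (1 + t)); apply: Rmult_le_compat_l; lra.
Qed.

Theorem mainTheorem3 :
  forall lambda : R, 0 < lambda < 1 ->
  exists c : R, 0 < c /\
  forall rho : R, 0 < rho ->
  exists M0 : nat, forall M : nat, leq M0 M ->
  exists C : R, forall n : nat,
    @ER_prob n (lambda / INR n)
       (fun E => Rleb (rho * INR n) (INR #|S_M M E|))
     <= C * exp (- (c * rho * INR n)).
Proof.
move=> l [l0 l1].
pose t := (1 - l) / 2; pose w := 1 + t; pose z := w * (1 - l * t).
have t0 : 0 < t by rewrite /t; lra.
have lt_small : l * (1 + t) < 1 by rewrite /t; nra.
have z1 : 1 < z by rewrite /z /w; nra.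
have zw : z <= w by rewrite /z /w; nra.
pose a := ln z.
have a0 : 0 < a by rewrite /a -ln_1; apply: ln_increasing; lra.
have ea : exp a = z by rewrite /a exp_ln //; lra.
exists (a / 4); split; first lra.
move=> rho rho0.
have eps0 : 0 < a * rho / 4 / w by apply: Rdiv_lt_0_compat; rewrite /w; nra.
have [M0 M0_large] := @exp_neg_eventually_le (a / 2) _ ltac:(lra) eps0.
exists M0 => M /M0_large M_large; exists 1 => n; rewrite Rmult_1_l.
have M_small : exp (- (a / 2 * INR M.+1)) * w <= a * rho / 4.
  apply: (Rle_trans _ (a * rho / 4 / w * w)); last by right; field; rewrite /w; lra.
  by apply: Rmult_le_compat_r => //; rewrite /w; lra.
case: n => [|k].
  rewrite ER_prob_I0; apply: (ER_tail_bound (w := w)) => //=; lra.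
have k1 : 1 <= INR k.+1 by rewrite S_INR; have := pos_INR k; lra.
set p := l / INR k.+1.
have pk : p * INR k.+1 = l by rewrite /p; field; lra.
have p0 : 0 <= p by apply: Rlt_le; apply: Rdiv_lt_0_compat; lra.
have p1 : p <= 1 by apply: (Rmult_le_reg_r (INR k.+1)); lra.
apply: (ER_tail_bound (w := w)) => //; rewrite ea; first lra.
by apply: binomial_step_le => //; nra.
Qed.
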